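(* Assume $0<\rho_{\ell-1,\ell}<1$ for $\ell=1,\dots,L$. For every $k\ge1$ and every $\ell=2,\dots,L+1$, $$q_{k,\ell}=\alpha_{k,\ell}\cdot\prod_{j=1}^{\ell-1}\Lambda_{k,j}\cdot\prod_{m=0}^{k-2}(1+\zeta_{m,\ell}),$$ where $\Lambda_{k,j}=\prod_{m=1}^kL_{m,j}$, $$\alpha_{k,\ell}=\Big(\frac{1-\rho_{\ell-1,\ell}}{1-\rho}\Big)^k\prod_{j=1}^{\ell-2}\rho_{j,j+1}\cdot\sum_{j=0}^{\ell-1}\frac{1-\rho_{j,j+1}}{1-\rho},$$ $$\zeta_{m,\ell}=\frac{1}{(1-\rho_{\ell-1,\ell})\prod_{j=1}^{\ell-1}L_{m+1,j}}\cdot\frac{\sum_{j=1}^{\ell-1}q_{m,j}\,w_j^\ell\,C_{m+1,j,\ell}}{\sum_{j=1}^{\ell}q_{m,j}\,w_j^\ell},$$ $$B_{m,n,\ell}=\sum_{p=n-1}^{\ell-1}(1-\rho_{p,p+1})\prod_{j=1}^pL_{m,j},\qquad C_{m,n,\ell}=B_{m,n,\ell}-(1-\rho_{\ell-1,\ell})\prod_{j=1}^{\ell-1}L_{m,j}\quad(1\le n\le\ell),$$ and an empty product equals $1$.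
   Context: Model. Fix an integer $L\ge1$, $\rho\in(0,1)$ and $\rho_{\ell-1,\ell}$ ($\ell=2,\dots,L$); put $\rho_{0,1}=\rho$ and $\rho_{L,L+1}=0$. Change-points: $P(\Gamma_1=m)=\rho(1-\rho)^m$, $m\ge0$; $\Gamma_\ell=\Gamma_{\ell-1}+G_\ell$ with independent $G_\ell$, $P(G_\ell=m)=\rho_{\ell-1,\ell}(1-\rho_{\ell-1,\ell})^m$. Observations $Z_{k,\ell}$ are conditionally independent given the change-points with density $f_0$ if $k<\Gamma_\ell$ and $f_1$ if $k\ge\Gamma_\ell$, where $f_0,f_1$ are mutually absolutely continuous. $L_{k,j}=f_1(Z_{k,j})/f_0(Z_{k,j})$. $q_{k,\ell}=p_{k,\ell}/(\rho p_{k,1})$, $\ell=1,\dots,L+1$, where $p_{k,\ell}=P(\Gamma_1\le k,\dots,\Gamma_{\ell-1}\le k,\Gamma_\ell>k,\dots,\Gamma_L>k\mid\mathbf Z_1,\dots,\mathbf Z_k)$. Weights $w_m^\ell=\prod_{j=m-1}^{\ell-2}\rho_{j,j+1}$ ($1\le m\le\ell$; equal to $1$ if $m=\ell$). These satisfy $q_{k,1}=1/\rho$, $q_{0,\ell}=\frac{(1-\rho_{\ell-1,\ell})\prod_{j=0}^{\ell-2}\rho_{j,j+1}}{\rho(1-\rho)}$ for $\ell\ge2$, and for $k\ge1$: $q_{k,\ell}=\frac{1-\rho_{\ell-1,\ell}}{1-\rho}\prod_{j=1}^{\ell-1}L_{k,j}\sum_{j=1}^{\ell}q_{k-1,j}w_j^\ell$.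 *)

From HB Require Import structures.
From mathcomp Require Import all_boot all_order all_algebra.
Set Implicit Arguments. Unset Strict Implicit. Unset Printing Implicit Defensive.
Import Order.TTheory GRing.Theory Num.Theory.
Local Open Scope ring_scope.

(* Conventions:
   rho p      stands for rho_{p,p+1}   (so rho 0 = rho, rho L = 0)
   Lr k j     stands for L_{k,j}       (k >= 1, 1 <= j <= L)
   q k l      stands for q_{k,l}       (k >= 0, 1 <= l <= L+1)            *)

Definition lr (R : realFieldType) (X : Type) (f0 f1 : X -> R)
  (Z : nat -> nat -> X) (k j : nat) : R := f1 (Z k j) / f0 (Z k j).

Definition wgt (R : realFieldType) (rho : nat -> R) (m l : nat) : R :=
  \prod_(m.-1 <= j < l.-1) rho j.

Definition Lambda (R : realFieldType) (Lr : nat -> nat -> R) (k j : nat) : R :=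
  \prod_(1 <= m < k.+1) Lr m j.

Definition alpha (R : realFieldType) (rho : nat -> R) (k l : nat) : R :=
  ((1 - rho l.-1) / (1 - rho 0%N)) ^+ k
  * (\prod_(1 <= j < l.-1) rho j)
  * \sum_(0 <= j < l) (1 - rho j) / (1 - rho 0%N).

Definition Bc (R : realFieldType) (rho : nat -> R) (Lr : nat -> nat -> R)
  (m n l : nat) : R :=
  \sum_(n.-1 <= p < l) (1 - rho p) * \prod_(1 <= j < p.+1) Lr m j.

Definition Cc (R : realFieldType) (rho : nat -> R) (Lr : nat -> nat -> R)
  (m n l : nat) : R :=
  Bc rho Lr m n l - (1 - rho l.-1) * \prod_(1 <= j < l) Lr m j.

Definition zeta (R : realFieldType) (rho : nat -> R) (Lr : nat -> nat -> R)
  (q : nat -> nat -> R) (m l : nat) : R :=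
  1 / ((1 - rho l.-1) * \prod_(1 <= j < l) Lr m.+1 j)
  * ((\sum_(1 <= j < l) q m j * wgt rho j l * Cc rho Lr m.+1 j l)
     / (\sum_(1 <= j < l.+1) q m j * wgt rho j l)).

From HB Require Import structures.
From mathcomp Require Import all_boot all_order all_algebra.
From mathcomp Require Import ring.
Set Implicit Arguments. Unset Strict Implicit. Unset Printing Implicit Defensive.
Import Order.TTheory GRing.Theory Num.Theory.
Local Open Scope ring_scope.

(* Fix l with 2 <= l <= L+1 and write u = 1 - rho_{l-1}, v = 1 - rho,
   P_m = prod_{j=1}^{l-1} L_{m,j}, and call
       S_m = sum_{j=1}^{l} q_{m,j} w_j^l
   the weighted mass of step m, so that the recursion reads
   q_{m+1,l} = (u/v) P_{m+1} S_m.  The whole proof is the one-step identity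
       S_{m+1} = (u/v) P_{m+1} S_m (1 + zeta_{m,l}),
   obtained by expanding each q_{m+1,n} (n <= l) with the recursion, using
   w_j^n w_n^l = w_j^l, exchanging the two sums of the resulting triangular
   double sum (the inner sums become B_{m+1,j,l}), and separating the term
   j = l, for which B_{m+1,l,l} = u P_{m+1}.  Together with the explicit value
   of S_0 (from the initial conditions) the identity telescopes to the closed
   form. *)

Lemma sum_triangular_exchange (R : comNzRingType) (G a : nat -> R) (N : nat) :
  \sum_(1 <= n < N.+1) G n.-1 * \sum_(1 <= j < n.+1) a j
  = \sum_(1 <= j < N.+1) a j * \sum_(j.-1 <= p < N) G p.
Proof.
elim: N => [|N IH]; first by rewrite !big_geq.
have split_inner j : (1 <= j < N.+2)%N ->
    a j * \sum_(j.-1 <= p < N.+1) G p = a j * \sum_(j.-1 <= p < N) G p + a j * G N.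
  by case: j => [|j] //= hj; rewrite big_nat_recr ?mulrDr.
rewrite big_nat_recr //= IH (eq_big_nat _ _ split_inner) big_split /=.
rewrite [X in _ = X + _]big_nat_recr //= [X in _ = _ + _ * X + _]big_geq //.
by rewrite mulr0 addr0 -big_distrl mulrC.
Qed.

Lemma wgt_mul (R : realFieldType) (rho : nat -> R) (j n l : nat) :
  (1 <= j <= n)%N -> (n <= l)%N -> wgt rho j n * wgt rho n l = wgt rho j l.
Proof.
by move=> /andP[_ hjn] hnl; rewrite /wgt -big_cat_nat // -!subn1 leq_sub2r.
Qed.

Lemma Bc_diag (R : realFieldType) (rho : nat -> R) (Lr : nat -> nat -> R)
    (m l : nat) :
  (1 <= l)%N -> Bc rho Lr m l l = (1 - rho l.-1) * \prod_(1 <= j < l) Lr m j.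
Proof.
by case: l => // l _; rewrite /Bc big_nat1.
Qed.

Lemma prod_nat_gt0 (R : numDomainType) (m n : nat) (F : nat -> R) :
  (forall i, (m <= i < n)%N -> 0 < F i) -> 0 < \prod_(m <= i < n) F i.
Proof.
by move=> F_gt0; rewrite big_nat_cond; apply: prodr_gt0 => i /andP[/F_gt0].
Qed.

Lemma sum_nat_gt0 (R : numDomainType) (m n : nat) (F : nat -> R) :
  (m < n)%N -> (forall i, (m <= i < n)%N -> 0 < F i) ->
  0 < \sum_(m <= i < n) F i.
Proof.
move=> hmn F_gt0; rewrite big_ltn //; apply: ltr_wpDr; last by rewrite F_gt0 ?leqnn.
rewrite big_nat_cond; apply: sumr_ge0 => i /andP[/andP[hi hin] _].
by rewrite ltW // F_gt0 // hin (ltnW hi).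
Qed.

Lemma alpha_succ (R : realFieldType) (rho : nat -> R) (k l : nat) :
  alpha rho k.+1 l = (1 - rho l.-1) / (1 - rho 0%N) * alpha rho k l.
Proof. by rewrite /alpha exprS !mulrA. Qed.

Lemma prod_Lambda_succ (R : realFieldType) (Lr : nat -> nat -> R) (k l : nat) :
  \prod_(1 <= j < l) Lambda Lr k.+1 j
  = (\prod_(1 <= j < l) Lambda Lr k j) * \prod_(1 <= j < l) Lr k.+1 j.
Proof. by rewrite -big_split; apply: eq_bigr => j _; rewrite /Lambda big_nat_recr. Qed.

(* The model, with the likelihood ratios abstracted to any positive Lr. *)
Section ClosedForm.

Variables (R : realFieldType) (L : nat) (rho : nat -> R).
Variables (Lr : nat -> nat -> R) (q : nat -> nat -> R).

Hypothesis L_gt0 : (0 < L)%N.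
Hypothesis rho_range : forall p, (p < L)%N -> 0 < rho p < 1.
Hypothesis rho_last : rho L = 0.
Hypothesis Lr_gt0 : forall k j, 0 < Lr k j.
Hypothesis q_first : forall k, q k 1%N = 1 / rho 0%N.
Hypothesis q_init : forall l, (2 <= l <= L.+1)%N ->
  q 0%N l = (1 - rho l.-1) * (\prod_(0 <= j < l.-1) rho j)
            / (rho 0%N * (1 - rho 0%N)).
Hypothesis q_rec : forall k l, (1 <= k)%N -> (1 <= l <= L.+1)%N ->
  q k l = (1 - rho l.-1) / (1 - rho 0%N)
          * (\prod_(1 <= j < l) Lr k j)
          * \sum_(1 <= j < l.+1) q k.-1 j * wgt rho j l.

Definition mass (m l : nat) : R := \sum_(1 <= j < l.+1) q m j * wgt rho j l.

Definition lrprod (m l : nat) : R := \prod_(1 <= j < l) Lr m j.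

Lemma rho_gt0 p : (p < L)%N -> 0 < rho p.
Proof. by move=> /rho_range /andP[]. Qed.

Lemma onem_rho_gt0 p : (p <= L)%N -> 0 < 1 - rho p.
Proof.
rewrite leq_eqVlt => /orP[/eqP->|/rho_range/andP[_]]; last by rewrite subr_gt0.
by rewrite rho_last subr0 ltr01.
Qed.

Lemma wgt_gt0 j l : (l <= L.+1)%N -> 0 < wgt rho j l.
Proof.
move=> hl; apply: prod_nat_gt0 => i /andP[_ hi]; apply: rho_gt0.
by apply: leq_trans hi _; case: l hl.
Qed.

Lemma lrprod_gt0 m l : 0 < lrprod m l.
Proof. exact: prod_nat_gt0. Qed.

Lemma q_gt0 m j : (1 <= j <= L.+1)%N -> 0 < q m j.
Proof.
elim: m j => [|m IH] [|[|j]] //= hj.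
- by rewrite q_first div1r invr_gt0 rho_gt0.
- rewrite q_init //= divr_gt0 ?mulr_gt0 ?rho_gt0 ?onem_rho_gt0 //.
  by apply: prod_nat_gt0 => i /andP[_ hi]; rewrite rho_gt0 // (leq_trans hi).
- by rewrite q_first div1r invr_gt0 rho_gt0.
- rewrite q_rec //= !mulr_gt0 ?invr_gt0 ?onem_rho_gt0 ?lrprod_gt0 //.
  apply: sum_nat_gt0 => // i /andP[hi1 hi2].
  by rewrite mulr_gt0 ?wgt_gt0 ?IH // hi1 (leq_trans _ hj).
Qed.

Lemma mass_gt0 m l : (1 <= l <= L.+1)%N -> 0 < mass m l.
Proof.
move=> /andP[hl1 hlL]; apply: sum_nat_gt0 => // j /andP[hj1 hjl].
by rewrite mulr_gt0 ?wgt_gt0 ?q_gt0 // hj1 (leq_trans _ hlL).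
Qed.

Lemma q_succ m l : (1 <= l <= L.+1)%N ->
  q m.+1 l = (1 - rho l.-1) / (1 - rho 0%N) * lrprod m.+1 l * mass m l.
Proof. exact: q_rec. Qed.

Lemma mass_succ_identity m l : (1 <= l <= L.+1)%N ->
  (1 - rho 0%N) * mass m.+1 l
  = (1 - rho l.-1) * lrprod m.+1 l * mass m l
    + \sum_(1 <= j < l) q m j * wgt rho j l * Cc rho Lr m.+1 j l.
Proof.
move=> /andP[hl1 hlL].
pose G p := (1 - rho p) * \prod_(1 <= i < p.+1) Lr m.+1 i.
pose a j := q m j * wgt rho j l.
have v_neq0 : 1 - rho 0%N != 0 by rewrite gt_eqF ?onem_rho_gt0.
have expand : (1 - rho 0%N) * mass m.+1 l
    = \sum_(1 <= n < l.+1) G n.-1 * \sum_(1 <= j < n.+1) a j.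
  rewrite /mass mulr_sumr; apply: eq_big_nat => n /andP[hn1 hnl].
  rewrite q_succ ?hn1 ?(leq_trans _ hlL) // /G /lrprod prednK //.
  have inner : \sum_(1 <= j < n.+1) a j = mass m n * wgt rho n l.
    rewrite /mass big_distrl; apply: eq_big_nat => j /andP[hj1 hjn] /=.
    by rewrite /a -mulrA wgt_mul ?hj1.
  by rewrite inner; field.
rewrite expand sum_triangular_exchange.
rewrite (eq_bigr (fun j => a j * Bc rho Lr m.+1 j l)) // big_nat_recr //= Bc_diag //.
rewrite /mass big_nat_recr //= /Cc.
under [X in _ = _ + X]eq_bigr do rewrite mulrBr.
by rewrite sumrB -big_distrl /= /lrprod /a; ring.
Qed.

Lemma mass_succ m l : (1 <= l <= L.+1)%N ->
  mass m.+1 l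
  = (1 - rho l.-1) / (1 - rho 0%N) * lrprod m.+1 l * mass m l
    * (1 + zeta rho Lr q m l).
Proof.
move=> hl; have /andP[_ hlL] := hl.
have u_neq0 : 1 - rho l.-1 != 0.
  by rewrite gt_eqF ?onem_rho_gt0 //; case: (l) hlL.
have v_neq0 : 1 - rho 0%N != 0 by rewrite gt_eqF ?onem_rho_gt0.
have P_neq0 : lrprod m.+1 l != 0 by rewrite gt_eqF ?lrprod_gt0.
have S_neq0 : mass m l != 0 by rewrite gt_eqF ?mass_gt0.
have -> : mass m.+1 l = ((1 - rho 0%N) * mass m.+1 l) / (1 - rho 0%N).
  by rewrite mulrC mulKf.
rewrite mass_succ_identity // /zeta -/(lrprod m.+1 l) -/(mass m l).
by field; rewrite u_neq0 v_neq0 P_neq0 S_neq0.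
Qed.

Lemma mass_init l : (2 <= l <= L.+1)%N ->
  mass 0%N l = \prod_(1 <= j < l.-1) rho j
               * \sum_(0 <= j < l) (1 - rho j) / (1 - rho 0%N).
Proof.
move=> /andP[hl2 hlL].
have r0_neq0 : rho 0%N != 0 by rewrite gt_eqF ?rho_gt0.
have v_neq0 : 1 - rho 0%N != 0 by rewrite gt_eqF ?onem_rho_gt0.
have prod_from1 : \prod_(1 <= t < l.-1) rho t = \prod_(0 <= t < l.-1) rho t / rho 0%N.
  rewrite [in RHS]big_ltn; first by rewrite mulrC mulKf.
  by rewrite -ltnS prednK // ltnW.
rewrite /mass [LHS]big_add1 /= mulr_sumr; apply: eq_big_nat => -[|j] /andP[_ hj].
  by rewrite q_first /wgt /= prod_from1; field; rewrite r0_neq0 v_neq0.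
rewrite q_init ?(leq_trans hj hlL) //= /wgt /= prod_from1.
rewrite [in RHS](@big_cat_nat _ _ _ j.+1) //=; last by case: (l) hj.
by field; rewrite r0_neq0 v_neq0.
Qed.

Lemma closed_form_mass k l : (2 <= l <= L.+1)%N ->
  alpha rho k.+1 l * (\prod_(1 <= j < l) Lambda Lr k.+1 j)
    * \prod_(0 <= m < k) (1 + zeta rho Lr q m l)
  = (1 - rho l.-1) / (1 - rho 0%N) * lrprod k.+1 l * mass k l.
Proof.
move=> hl; have hl1 : (1 <= l <= L.+1)%N by case/andP: hl => /ltnW -> ->.
elim: k => [|k IH].
  rewrite [X in _ * X = _]big_geq // mulr1 alpha_succ mass_init // /alpha expr0 mul1r.
  have -> : \prod_(1 <= j < l) Lambda Lr 1 j = lrprod 1 l.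
    by apply: eq_bigr => j _; rewrite /Lambda big_nat1.
  ring.
rewrite big_nat_recr //= mass_succ // -IH alpha_succ (prod_Lambda_succ Lr k.+1 l).
by rewrite -/(lrprod k.+2 l); ring.
Qed.

Lemma q_closed_form k l : (2 <= l <= L.+1)%N ->
  q k.+1 l = alpha rho k.+1 l * (\prod_(1 <= j < l) Lambda Lr k.+1 j)
             * \prod_(0 <= m < k) (1 + zeta rho Lr q m l).
Proof.
move=> hl; have hl1 : (1 <= l <= L.+1)%N by case/andP: hl => /ltnW -> ->.
by rewrite closed_form_mass // q_succ.
Qed.

End ClosedForm.

Theorem proposition6 (R : realFieldType) (L : nat) (rho : nat -> R)
  (X : Type) (f0 f1 : X -> R) (Z : nat -> nat -> X) (q : nat -> nat -> R) :
  (1 <= L)%N ->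
  (forall p, (p < L)%N -> 0 < rho p < 1) ->
  rho L = 0 ->
  (forall x, 0 < f0 x) -> (forall x, 0 < f1 x) ->
  (forall k, q k 1%N = 1 / rho 0%N) ->
  (forall l, (2 <= l <= L.+1)%N ->
     q 0%N l = (1 - rho l.-1) * (\prod_(0 <= j < l.-1) rho j)
               / (rho 0%N * (1 - rho 0%N))) ->
  (forall k l, (1 <= k)%N -> (1 <= l <= L.+1)%N ->
     q k l = (1 - rho l.-1) / (1 - rho 0%N)
             * (\prod_(1 <= j < l) lr f0 f1 Z k j)
             * \sum_(1 <= j < l.+1) q k.-1 j * wgt rho j l) ->
  forall k l, (1 <= k)%N -> (2 <= l <= L.+1)%N ->
    q k l = alpha rho k l
            * (\prod_(1 <= j < l) Lambda (lr f0 f1 Z) k j)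
            * \prod_(0 <= m < k.-1) (1 + zeta rho (lr f0 f1 Z) q m l).
Proof.
move=> L_gt0 rho_range rho_last f0_gt0 f1_gt0 q_first q_init q_rec.
have lr_gt0 k j : 0 < lr f0 f1 Z k j by rewrite /lr divr_gt0.
move=> [//|k] l _ hl.
exact: (q_closed_form L_gt0 rho_range rho_last lr_gt0 q_first q_init q_rec).
Qed.
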